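(* Let $n,m$ be positive integers and $\mathbf a'=(a_1,\dots,a_{n+1})$, $\mathbf b'=(b_1,\dots,b_{n+1})\in\mathbb Z^{n+1}$ with $\sum_ia_i=\sum_ib_i$. Then $\mathcal F_{H(n,m)}(\mathbf a',\mathbf b')$ is integrally equivalent to $\mathcal F_{H(n,m)}(\mathrm{rev}(\mathbf b'),\mathrm{rev}(\mathbf a'))$, where $\mathrm{rev}(v_1,\dots,v_{n+1})=(v_{n+1},\dots,v_1)$.
   Context: $H(n,m)$ is the directed $(n+1)\times(m+1)$ grid graph with vertex set $\{(i,j):1\le i\le n+1,\ 0\le j\le m\}$ and edges $((i,j),(i,j+1))$ for $1\le i\le n+1$, $0\le j\le m-1$, and $((i,j),(i+1,j))$ for $1\le i\le n$, $0\le j\le m$. $\mathcal F_{H(n,m)}(\mathbf a',\mathbf b')$ is the set of nonnegative real edge weightings such that at each vertex, outflow minus inflow equals its netflow, where $(i,0)$ has netflow $a_i$, $(i,m)$ has netflow $-b_i$ ($1\le i\le n+1$), and all other vertices have netflow $0$. Two polytopes are integrally equivalent if there is an affine map restricting to a bijection between them that preserves the lattice (a bijection between the integer points of their affine spans). *)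

From HB Require Import structures.
From mathcomp Require Import all_boot all_order all_algebra.
From mathcomp Require Import reals.
Set Implicit Arguments. Unset Strict Implicit. Unset Printing Implicit Defensive.
Import Order.TTheory GRing.Theory Num.Theory.
Local Open Scope ring_scope.

(* Vertices of H(n,m): (i,j) with i : 'I_n.+1 (paper's row i+1) and
   j : 'I_m.+1 (paper's column j). *)
Definition Hvert (n m : nat) : finType := ('I_n.+1 * 'I_m.+1)%type.

(* Edges: inl (i,j) is the horizontal edge (i,j) -> (i,j+1), j < m;
          inr (i,j) is the vertical edge (i,j) -> (i+1,j), i < n. *)
Definition Hedge (n m : nat) : finType :=
  (('I_n.+1 * 'I_m) + ('I_n * 'I_m.+1))%type.

Definition Hsrc (n m : nat) (e : Hedge n m) : Hvert n m :=
  match e with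
  | inl (i, j) => (i, widen_ord (leqnSn m) j)
  | inr (i, j) => (widen_ord (leqnSn n) i, j)
  end.

Definition Htgt (n m : nat) (e : Hedge n m) : Hvert n m :=
  match e with
  | inl (i, j) => (i, lift ord0 j)
  | inr (i, j) => (lift ord0 i, j)
  end.

Definition Hnetflow (R : nzRingType) (n m : nat) (a b : 'I_n.+1 -> int)
    (v : Hvert n m) : R :=
  (if v.2 == ord0 then (a v.1)%:~R else 0)
  - (if v.2 == ord_max then (b v.1)%:~R else 0).

Definition flow_polytope (R : realType) (n m : nat) (a b : 'I_n.+1 -> int)
    (x : Hedge n m -> R) : Prop :=
  (forall e, 0 <= x e) /\
  (forall v : Hvert n m,
      \sum_(e | Hsrc e == v) x e - \sum_(e | Htgt e == v) x e
      = Hnetflow R a b v).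

Definition rev_vec (n : nat) (a : 'I_n.+1 -> int) : 'I_n.+1 -> int :=
  fun i => a (rev_ord i).

Definition affine_map (R : nzRingType) (E E' : finType)
    (f : (E -> R) -> (E' -> R)) : Prop :=
  exists (A : E' -> E -> R) (c : E' -> R),
    forall x e', f x e' = c e' + \sum_(e : E) A e' e * x e.

Definition aff_span (R : nzRingType) (E : finType) (P : (E -> R) -> Prop)
    (x : E -> R) : Prop :=
  exists (k : nat) (lam : 'I_k -> R) (p : 'I_k -> E -> R),
    (forall i, P (p i)) /\ \sum_(i < k) lam i = 1 /\
    (forall e, x e = \sum_(i < k) lam i * p i e).

Definition integral_point (R : nzRingType) (E : finType) (x : E -> R) : Prop :=
  forall e, exists z : int, x e = z%:~R.

Definition bij_between (A B : Type) (f : A -> B) (S : A -> Prop)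
    (T : B -> Prop) : Prop :=
  (forall x, S x -> T (f x)) /\
  (forall x y, S x -> S y -> f x = f y -> x = y) /\
  (forall y, T y -> exists2 x, S x & f x = y).

Definition integrally_equivalent (R : nzRingType) (E E' : finType)
    (P : (E -> R) -> Prop) (Q : (E' -> R) -> Prop) : Prop :=
  exists f : (E -> R) -> (E' -> R),
    affine_map f /\ bij_between f P Q /\
    bij_between f (fun x => aff_span P x /\ integral_point x)
                  (fun y => aff_span Q y /\ integral_point y).

From HB Require Import structures.
From mathcomp Require Import all_boot all_order all_algebra.
From mathcomp Require Import reals.
From mathcomp Require Import zify.
From Stdlib Require Import FunctionalExtensionality.
Set Implicit Arguments. Unset Strict Implicit. Unset Printing Implicit Defensive.
Import Order.TTheory GRing.Theory Num.Theory.
Local Open Scope ring_scope.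

(* Rotating the grid H(n,m) by a half turn, (i,j) |-> (n+2-i, m-j), maps every
   edge to an edge with source and target exchanged.  Relabelling the edge
   coordinates along this rotation therefore turns a flow with netflow a' on
   the left column and -b' on the right column into a flow with netflow
   rev(b') on the left and -rev(a') on the right.  A permutation of
   coordinates is a lattice-preserving affine bijection, so it is an integral
   equivalence. *)

Section CoordinatePermutation.
Variables (R : nzRingType) (E E' : finType) (s : E' -> E).

Lemma affine_map_comp : affine_map (fun x : E -> R => x \o s).
Proof.
exists (fun e' e => if e == s e' then 1 else 0), (fun _ => 0) => x e'.
rewrite add0r (bigD1 (s e')) //= eqxx mul1r big1 ?addr0 // => e /negbTE ->.
by rewrite mul0r.
Qed.

Lemma integral_point_comp (x : E -> R) :
  integral_point x -> integral_point (x \o s).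
Proof. by move=> xZ e'; apply: xZ. Qed.

Lemma aff_span_comp (P : (E -> R) -> Prop) (Q : (E' -> R) -> Prop) x :
  (forall p, P p -> Q (p \o s)) -> aff_span P x -> aff_span Q (x \o s).
Proof.
move=> PQ [k [lam [p [Pp [lam1 xE]]]]].
exists k, lam, (fun i => p i \o s); split=> [i|]; first exact: PQ.
by split=> // e'; rewrite /= xE.
Qed.

End CoordinatePermutation.

Lemma bij_between_can (A B : Type) (f : A -> B) (g : B -> A) S T :
  cancel f g -> cancel g f ->
  (forall x, S x -> T (f x)) -> (forall y, T y -> S (g y)) ->
  bij_between f S T.
Proof.
move=> fK gK ST TS; split=> //; split=> [x y _ _|y Ty]; first exact: (can_inj fK).
by exists (g y); [apply: TS | apply: gK].
Qed.

Lemma precomp_can (A B C : Type) (t : A -> B) (t' : B -> A) :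
  cancel t' t -> cancel (fun x : B -> C => x \o t) (fun y => y \o t').
Proof. by move=> tK x; apply: functional_extensionality => b /=; rewrite tK. Qed.

Lemma integrally_equivalent_comp (R : nzRingType) (E E' : finType)
    (s : E' -> E) (s' : E -> E') (P : (E -> R) -> Prop) (Q : (E' -> R) -> Prop) :
  cancel s s' -> cancel s' s ->
  (forall x, P x -> Q (x \o s)) -> (forall y, Q y -> P (y \o s')) ->
  integrally_equivalent P Q.
Proof.
move=> sK s'K PQ QP.
exists (fun x => x \o s); split; first exact: affine_map_comp.
split; apply: (bij_between_can (precomp_can s'K) (precomp_can sK)) => //.
- by move=> x [Px Zx]; split; [apply: aff_span_comp Px | apply: integral_point_comp].
- by move=> y [Qy Zy]; split; [apply: aff_span_comp Qy | apply: integral_point_comp].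
Qed.

Lemma sum_fiber_involutive (R : nmodType) (E V : finType) (s : E -> E)
    (t : V -> V) (p q : E -> V) (x : E -> R) (v : V) :
  involutive s -> involutive t -> (forall e, p (s e) = t (q e)) ->
  \sum_(e | p e == v) x (s e) = \sum_(e | q e == t v) x e.
Proof.
move=> sK tK pqE; rewrite (reindex_inj (inv_inj sK)) /=.
by apply: eq_big => e; rewrite ?sK // pqE (canF_eq tK).
Qed.

Lemma rev_vecK (n : nat) (a : 'I_n.+1 -> int) : rev_vec (rev_vec a) = a.
Proof. by apply: functional_extensionality => i; rewrite /rev_vec rev_ordK. Qed.

Lemma rev_ord_eq0 (k : nat) (j : 'I_k.+1) : (rev_ord j == ord0) = (j == ord_max).
Proof.
rewrite (canF_eq rev_ordK); congr (_ == _); apply: val_inj => /=; lia.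
Qed.

Lemma rev_ord_eq_max (k : nat) (j : 'I_k.+1) : (rev_ord j == ord_max) = (j == ord0).
Proof. by rewrite -[in RHS](rev_ordK j) rev_ord_eq0. Qed.

Section GridRotation.
Variables (n m : nat).

Definition rot_vert (v : Hvert n m) : Hvert n m := (rev_ord v.1, rev_ord v.2).

Definition rot_edge (e : Hedge n m) : Hedge n m :=
  match e with
  | inl (i, j) => inl (rev_ord i, rev_ord j)
  | inr (i, j) => inr (rev_ord i, rev_ord j)
  end.

Lemma rot_vertK : involutive rot_vert.
Proof. by case=> i j; rewrite /rot_vert /= !rev_ordK. Qed.

Lemma rot_edgeK : involutive rot_edge.
Proof. by case=> [[i j]|[i j]] /=; rewrite !rev_ordK. Qed.

Lemma Hsrc_rot e : Hsrc (rot_edge e) = rot_vert (Htgt e).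
Proof.
by case: e => [[i j]|[i j]]; congr pair; apply: val_inj => /=; rewrite /bump /=;
  move: (ltn_ord i) (ltn_ord j); lia.
Qed.

Lemma Htgt_rot e : Htgt (rot_edge e) = rot_vert (Hsrc e).
Proof. by rewrite -[in RHS](rot_edgeK e) Hsrc_rot rot_vertK. Qed.

Lemma Hnetflow_rot (R : nzRingType) (a b : 'I_n.+1 -> int) v :
  Hnetflow R (rev_vec b) (rev_vec a) v = - Hnetflow R a b (rot_vert v).
Proof. by rewrite /Hnetflow /= rev_ord_eq0 rev_ord_eq_max opprB. Qed.

Lemma flow_polytope_rot (R : realType) (a b : 'I_n.+1 -> int) x :
  @flow_polytope R n m a b x ->
  @flow_polytope R n m (rev_vec b) (rev_vec a) (x \o rot_edge).
Proof.
move=> [x_ge0 conservation]; split=> [e|v]; first exact: x_ge0.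
rewrite /= (sum_fiber_involutive _ _ rot_edgeK rot_vertK Hsrc_rot).
rewrite (sum_fiber_involutive _ _ rot_edgeK rot_vertK Htgt_rot).
by rewrite -opprB conservation Hnetflow_rot.
Qed.

End GridRotation.

Theorem proposition7p4 (R : realType) (n m : nat) (a b : 'I_n.+1 -> int) :
  (0 < n)%N -> (0 < m)%N ->
  \sum_(i < n.+1) a i = \sum_(i < n.+1) b i ->
  integrally_equivalent (@flow_polytope R n m a b)
                        (@flow_polytope R n m (rev_vec b) (rev_vec a)).
Proof.
move=> _ _ _.
apply: (integrally_equivalent_comp (@rot_edgeK n m) (@rot_edgeK n m)).
- exact: flow_polytope_rot.
- by move=> y /flow_polytope_rot; rewrite !rev_vecK.
Qed.
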